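(* For every $m\geq 0$ the following three families of objects are in bijection: (i) rooted bicolored chord diagrams with $m$ chords; (ii) bicolored ordered matchings of size $2m$; (iii) pairs $(\mathcal M_\bullet,S)$ where $\mathcal M_\bullet$ is a rooted map with $m$ edges (up to isomorphism of rooted maps) and $S$ is a quasi-tree of $\mathcal M_\bullet$.
   Context: A map is a triple $\mathcal M=(B,\sigma,\alpha)$ with $B$ finite, $\sigma,\alpha\in\mathrm{Sym}(B)$, $\alpha$ a fixed-point-free involution, $\langle\sigma,\alpha\rangle$ transitive on $B$. Edges are the cycles of $\alpha$; $\underline b=\{b,\alpha(b)\}$. A rooted map is a pair $(\mathcal M,b_\bullet)$ with $b_\bullet\in B$; rooted maps $(B,\sigma,\alpha,b_\bullet)$, $(B',\sigma',\alpha',b'_\bullet)$ are isomorphic if there is a bijection $\phi:B\to B'$ with $\sigma'=\phi\sigma\phi^{-1}$, $\alpha'=\phi\alpha\phi^{-1}$, $\phi(b_\bullet)=b'_\bullet$ (pairs $(\mathcal M_\bullet,S)$ are taken up to such isomorphisms, carrying $S$ along). The tour of a set $F$ of edges is $\tau$ with $\tau(b)=\sigma(\alpha(b))$ if $\underline b\in F$ and $\tau(b)=\sigma(b)$ otherwise; a quasi-tree is a set of edges whose tour is a single cycle on $B$. A chord diagram with $m$ chords is a set of $2m$ points on a circle partitioned into $m$ pairs (chords); it is bicolored if each chord has color $1$ or $2$, and rooted if one of the $2m$ points is distinguished; rooted bicolored chord diagrams are considered up to orientation-preserving homeomorphisms of the circle respecting chords, colors and root. A bicolored ordered matching of size $2m$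 is a perfect matching of $\{1,\dots,2m\}$ each of whose $m$ pairs is colored $1$ or $2$. *)

From mathcomp Require Import all_boot all_fingroup.
Set Implicit Arguments. Unset Strict Implicit. Unset Printing Implicit Defensive.

Definition fpf_involution (T : finType) (a : T -> T) : Prop :=
  forall x, a x <> x /\ a (a x) = x.

Lemma rotn_proof (n k : nat) (i : 'I_n) : (i + k) %% n < n.
Proof. by rewrite ltn_pmod // (leq_ltn_trans (leq0n i) (ltn_ord i)). Qed.
Definition rotn (n k : nat) (i : 'I_n) : 'I_n := Ordinal (rotn_proof k i).

(* (i) rooted bicolored chord diagrams with m chords: the 2m points are placed
   counterclockwise at positions 0,...,2m-1 of the circle; [cd_chord i] is the
   other endpoint of the chord through i; colours: true = 1, false = 2.
   Convention: for m = 0 there are no points and the root is None (the empty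
   diagram); for m > 0 the root is Some point. *)
Record chord_diagram (m : nat) := ChordDiagram {
  cd_chord : {perm 'I_(2 * m)};
  cd_col : {ffun 'I_(2 * m) -> bool};
  cd_root : option 'I_(2 * m);
  cd_chordP : fpf_involution cd_chord;
  cd_colP : forall i, cd_col (cd_chord i) = cd_col i;
  cd_rootP : cd_root = None <-> m = 0 }.

(* Isomorphism of rooted bicolored chord diagrams: an orientation-preserving
   homeomorphism of the circle carrying points to points acts on the labels
   as a rotation. *)
Definition cd_iso (m : nat) (D D' : chord_diagram m) : Prop :=
  exists k : nat,
    (forall i, cd_chord D' (rotn k i) = rotn k (cd_chord D i)) /\
    (forall i, cd_col D' (rotn k i) = cd_col D i) /\
    cd_root D' = omap (rotn k) (cd_root D).

Record ordmatch (m : nat) := OrdMatch {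
  om_match : {perm 'I_(2 * m)};
  om_col : {ffun 'I_(2 * m) -> bool};
  om_matchP : fpf_involution om_match;
  om_colP : forall i, om_col (om_match i) = om_col i }.

Definition om_same (m : nat) (x y : ordmatch m) : Prop :=
  om_match x = om_match y /\ om_col x = om_col y.

(* Tour of the set of edges F, given as the set S of darts b with
   underline b in F (S is closed under alpha). *)
Definition tour (T : finType) (s a : T -> T) (S : {set T}) (b : T) : T :=
  if b \in S then s (a b) else s b.

Record rmap_qt (m : nat) := RMapQT {
  rm_sigma : {perm 'I_(2 * m)};
  rm_alpha : {perm 'I_(2 * m)};
  rm_root : option 'I_(2 * m);
  rm_S : {set 'I_(2 * m)};
  rm_alphaP : fpf_involution rm_alpha;
  rm_transP : forall b, orbit 'P%act <<[set rm_sigma; rm_alpha]>> b = [set: 'I_(2 * m)];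
  rm_rootP : rm_root = None <-> m = 0;
  rm_SP : forall b, (rm_alpha b \in rm_S) = (b \in rm_S);
  rm_quasi_tree : forall b b', fconnect (tour rm_sigma rm_alpha rm_S) b b' }.

Definition rm_iso (m : nat) (M M' : rmap_qt m) : Prop :=
  exists phi : {perm 'I_(2 * m)},
    (forall b, rm_sigma M' (phi b) = phi (rm_sigma M b)) /\
    (forall b, rm_alpha M' (phi b) = phi (rm_alpha M b)) /\
    rm_root M' = omap phi (rm_root M) /\
    rm_S M' = phi @: rm_S M.

Definition class_bij (X Y : Type) (RX : X -> X -> Prop) (RY : Y -> Y -> Prop)
  (f : X -> Y) : Prop :=
  (forall x x', RX x x' <-> RY (f x) (f x')) /\ (forall y, exists x, RY (f x) y).

From mathcomp Require Import all_boot all_fingroup zify.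
Set Implicit Arguments. Unset Strict Implicit. Unset Printing Implicit Defensive.

(* Rotating a rooted chord diagram until its root is the point 0 identifies
   its rotation class with an ordered matching.  An ordered matching becomes a
   map with a quasi-tree by taking the chords as edges, the colour-1 chords as
   the quasi-tree S and sigma := (i |-> i + 1) o (swap along the chords of S):
   the tour of S is then the rotation i |-> i + 1, rooted at 0.  Conversely, the
   tour of a quasi-tree is a single cycle through the root, and labelling the
   darts along it from the root puts every rooted map with a quasi-tree in this
   form; the labelling is unique because a permutation commuting with the
   rotation and fixing 0 is the identity. *)

Section Rotation.
Variable n : nat.
Implicit Types (i j : 'I_n) (k l : nat).

Lemma ord_gt0 i : 0 < n.
Proof. exact: leq_ltn_trans (leq0n _) (ltn_ord i). Qed.

Lemma rotnD k l i : rotn k (rotn l i) = rotn (l + k) i.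
Proof. by apply/val_inj => /=; rewrite modnDml addnA. Qed.

Lemma rotn_mod k i : rotn (k %% n) i = rotn k i.
Proof. by apply/val_inj => /=; rewrite modnDmr. Qed.

Lemma rotn0 i : rotn 0 i = i.
Proof. by apply/val_inj => /=; rewrite addn0 modn_small. Qed.

Lemma rotnn i : rotn n i = i.
Proof. by apply/val_inj => /=; rewrite modnDr modn_small. Qed.

Lemma rotnK k : k <= n -> cancel (@rotn n k) (rotn (n - k)).
Proof. by move=> le_kn i; rewrite rotnD subnKC // rotnn. Qed.

Lemma rotnKV k : k <= n -> cancel (@rotn n (n - k)) (rotn k).
Proof. by move=> le_kn i; rewrite rotnD subnK // rotnn. Qed.

Lemma rotn_inj k : injective (@rotn n k).
Proof.
move=> i j; rewrite -!(rotn_mod k).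
exact/can_inj/rotnK/ltnW/ltn_pmod/(ord_gt0 i).
Qed.

Lemma rotn_subnD k l i : l <= n ->
  rotn (n - (l + k) %% n) (rotn k i) = rotn (n - l) i.
Proof.
move=> le_ln; rewrite -{1}(rotnKV le_ln i) (rotnD k l) -(rotn_mod (l + k)) rotnK //.
exact/ltnW/ltn_pmod/(ord_gt0 i).
Qed.

Lemma rotn_shift k l i : k <= n -> rotn (l + (n - k)) (rotn k i) = rotn l i.
Proof. by move=> le_kn; rewrite rotnD addnCA subnKC // addnC -rotnD rotnn. Qed.

Lemma iter_rotn1 k i : iter k (rotn 1) i = rotn k i.
Proof. by elim: k => [|k IHk]; rewrite ?rotn0 // iterS IHk rotnD addn1. Qed.

Lemma rotn_to i j : rotn (j + (n - i)) i = j.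
Proof.
by apply/val_inj => /=; rewrite addnCA subnKC ?(ltnW (ltn_ord i)) // modnDr modn_small.
Qed.

Lemma fconnect_rotn1 i j : fconnect (rotn 1) i j.
Proof. by rewrite -(rotn_to i j) -iter_rotn1 fconnect_iter. Qed.

Lemma insub0_None : (insub 0 : option 'I_n) = None <-> n = 0.
Proof. by case: insubP => [o lt0n _|]; split => //; lia. Qed.

Lemma insub0_ord i : insub 0 = Some (Ordinal (ord_gt0 i)).
Proof. by case: insubP => [o _ o0 | ]; [congr Some; apply/val_inj | rewrite ord_gt0]. Qed.

Lemma rotn_from0 i o : val o = 0 -> rotn i o = i.
Proof. by move=> o0; apply/val_inj; rewrite /= o0 add0n modn_small. Qed.

Lemma omap_rotn_insub0 i : omap (rotn i) (insub 0) = Some i.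
Proof. by rewrite (insub0_ord i) /= rotn_from0. Qed.

Lemma rotn1_commute_id (phi : {perm 'I_n}) :
  omap phi (insub 0) = insub 0 -> (forall i, phi (rotn 1 i) = rotn 1 (phi i)) ->
  phi = 1%g.
Proof.
move=> phi0 phi_rotn; apply/permP => i; rewrite perm1.
move: phi0; rewrite (insub0_ord i); set o := Ordinal _ => -[phi_o].
rewrite -(rotn_from0 i (erefl : val o = 0)) -!iter_rotn1.
by elim: (nat_of_ord i) => // k IHk; rewrite iterS phi_rotn IHk.
Qed.

End Rotation.

Section Tour.
Variable T : finType.
Implicit Types (s a phi : {perm T}) (S : {set T}).

Lemma eq_imset_perm phi (A B : {set T}) :
  (forall b, (phi b \in B) = (b \in A)) -> B = phi @: A.
Proof.
by move=> phiAB; apply/setP => c; rewrite -(permKV phi c) mem_imset ?phiAB //; apply: perm_inj.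
Qed.

Lemma fpf_involution_conjg a phi : fpf_involution a -> fpf_involution (a ^ phi)%g.
Proof.
move=> a_fpf b; rewrite -(permKV phi b) !permJ.
have [a_b aab] := a_fpf ((phi^-1)%g b).
by split; [move/perm_inj | rewrite aab].
Qed.

Lemma tour_conj s a s' a' phi S S' :
  (forall b, s' (phi b) = phi (s b)) -> (forall b, a' (phi b) = phi (a b)) ->
  S' = phi @: S -> forall b, tour s' a' S' (phi b) = phi (tour s a S b).
Proof.
move=> phi_s phi_a -> b; rewrite /tour mem_imset; last exact: perm_inj.
by case: ifP => _; rewrite ?phi_a phi_s.
Qed.

Lemma tour_inj s a S : fpf_involution a -> (forall b, (a b \in S) = (b \in S)) ->
  injective (tour s a S).
Proof.
move=> a_fpf aS b c; rewrite /tour.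
case: ifP => Sb; case: ifP => Sc /perm_inj eq_bc //.
- by rewrite -(a_fpf b).2 eq_bc (a_fpf c).2.
- by move: Sb; rewrite -aS eq_bc Sc.
- by move: Sc; rewrite -aS -eq_bc Sb.
Qed.

Lemma quasi_tree_transitive s a S :
  (forall b c, fconnect (tour s a S) b c) ->
  forall b, orbit 'P%act <<[set s; a]>> b = [set: T].
Proof.
move=> qt b; apply/setP => c; rewrite inE; set G := <<_>>%g.
have s_gen : s \in G by rewrite mem_gen ?set21.
have a_gen : a \in G by rewrite mem_gen ?set22.
have orbit_tour d : orbit 'P%act G (tour s a S d) = orbit 'P%act G d.
  by rewrite /tour; case: ifP => _; rewrite ?(orbit_act 'P _ s_gen) ?(orbit_act 'P _ a_gen).
rewrite -(closed_connect _ (qt b c)) ?orbit_refl // => d _ /eqP <-.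
by apply/esym/orbit_transl; rewrite -orbit_tour orbit_refl.
Qed.

End Tour.

Section CycleLabelling.
Variables (n : nat) (f : 'I_n -> 'I_n) (r : 'I_n).
Hypotheses (f_inj : injective f) (f_cycle : forall b, fconnect f r b).

Lemma order_cycle : fingraph.order f r = n.
Proof.
rewrite -size_orbit -[RHS](size_enum_ord n); apply/eqP; rewrite eqn_leq.
apply/andP; split; apply: uniq_leq_size; rewrite ?orbit_uniq ?enum_uniq // => b.
  by rewrite mem_enum.
by rewrite -fconnect_orbit f_cycle.
Qed.

Lemma cycle_labelling :
  exists P : {perm 'I_n}, omap P (insub 0) = Some r /\ forall c, P (rotn 1 c) = f (P c).
Proof.
pose lab (i : 'I_n) := iter i f r.
have lab_inj : injective lab.
  move=> i j eq_ij; apply/val_inj/eqP.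
  have ltn_orbit (k : 'I_n) : k < size (fingraph.orbit f r) by rewrite size_orbit order_cycle.
  rewrite -(nth_uniq r (ltn_orbit i) (ltn_orbit j) (orbit_uniq f r)).
  by rewrite /fingraph.orbit !nth_traject ?order_cycle //; apply/eqP.
exists (perm lab_inj); split=> [|c]; first by rewrite (insub0_ord r) /= permE.
rewrite !permE /lab /= -iterS addn1.
have [/eqP c_last | c_lt] := boolP (c.+1 == n).
  by rewrite c_last modnn; have := iter_order f_inj r; rewrite order_cycle => ->.
by rewrite modn_small // ltn_neqAle c_lt ltn_ord.
Qed.

End CycleLabelling.

Section ChordDiagrams.
Variable m : nat.
Local Notation n := (2 * m).
Implicit Types (D : chord_diagram m) (x : ordmatch m).

Lemma insub0_darts_None : (insub 0 : option 'I_n) = None <-> m = 0.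
Proof. by split=> [/insub0_None | m0]; [lia | apply/insub0_None; lia]. Qed.

Definition cd_root_pos D : nat := if cd_root D is Some r then val r else 0.

Lemma cd_root_pos_le D : cd_root_pos D <= n.
Proof. by rewrite /cd_root_pos; case: (cd_root D) => // r; apply/ltnW/ltn_ord. Qed.

Lemma cd_rootE D : cd_root D = omap (rotn (cd_root_pos D)) (insub 0).
Proof.
rewrite /cd_root_pos; case eD: (cd_root D) => [r|]; first by rewrite omap_rotn_insub0.
by rewrite (insub0_darts_None.2 ((cd_rootP D).1 eD)).
Qed.

Lemma cd_root_posE D r : cd_root D = Some r -> cd_root_pos D = r.
Proof. by rewrite /cd_root_pos => ->. Qed.

Lemma cd_root_some D (i : 'I_n) : exists r, cd_root D = Some r.
Proof.
case eD: (cd_root D) => [r|]; first by exists r.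
by have := ord_gt0 i; rewrite ((cd_rootP D).1 eD).
Qed.

Definition cd_match_fun D (i : 'I_n) :=
  rotn (n - cd_root_pos D) (cd_chord D (rotn (cd_root_pos D) i)).

Lemma cd_match_fun_inj D : injective (cd_match_fun D).
Proof. by move=> i j /rotn_inj /perm_inj /rotn_inj. Qed.

Definition cd_match D : {perm 'I_n} := perm (@cd_match_fun_inj D).

Lemma cd_matchE D i :
  cd_match D i = rotn (n - cd_root_pos D) (cd_chord D (rotn (cd_root_pos D) i)).
Proof. exact: permE. Qed.

Lemma cd_match_fpf D : fpf_involution (cd_match D).
Proof.
move=> i; rewrite !cd_matchE rotnKV ?cd_root_pos_le //; split.
  move/(congr1 (rotn (cd_root_pos D))); rewrite rotnKV ?cd_root_pos_le //.
  exact: (cd_chordP D _).1.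
by rewrite (cd_chordP D (rotn _ i)).2 rotnK ?cd_root_pos_le.
Qed.

Definition cd_colour D : {ffun 'I_n -> bool} :=
  [ffun i => cd_col D (rotn (cd_root_pos D) i)].

Lemma cd_colourP D i : cd_colour D (cd_match D i) = cd_colour D i.
Proof. by rewrite !ffunE cd_matchE rotnKV ?cd_root_pos_le // cd_colP. Qed.

Definition om_of_cd D : ordmatch m := OrdMatch (cd_match_fpf D) (@cd_colourP D).

Lemma cd_iso_om_same D D' : cd_iso D D' -> om_same (om_of_cd D) (om_of_cd D').
Proof.
move=> [k [chordD' [colD' rootD']]]; split=> /=.
  apply/permP => i; have [r eD] := cd_root_some D i.
  have eD' : cd_root D' = Some (rotn k r) by rewrite rootD' eD.
  rewrite !cd_matchE (cd_root_posE eD) (cd_root_posE eD') /= rotn_mod -rotnD.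
  by rewrite chordD' rotn_subnD //; apply: ltnW.
apply/ffunP => i; have [r eD] := cd_root_some D i.
have eD' : cd_root D' = Some (rotn k r) by rewrite rootD' eD.
by rewrite !ffunE (cd_root_posE eD) (cd_root_posE eD') /= rotn_mod -rotnD colD'.
Qed.

Lemma om_same_cd_iso D D' : om_same (om_of_cd D) (om_of_cd D') -> cd_iso D D'.
Proof.
move=> [/= match_eq col_eq]; set r := cd_root_pos D; set r' := cd_root_pos D'.
have le_rn : r <= n by apply: cd_root_pos_le.
exists (r' + (n - r)); split; [|split].
- move=> i; rewrite -(rotnKV le_rn i) rotn_shift //.
  have := congr1 (fun P : {perm _} => P (rotn (n - r) i)) match_eq.
  rewrite /= !cd_matchE -/r -/r' rotnKV // => /(congr1 (rotn r')).
  rewrite rotnKV ?cd_root_pos_le // => <-.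
  by rewrite -{2}(rotnKV le_rn (cd_chord D i)) rotn_shift.
- move=> i; rewrite -(rotnKV le_rn i) rotn_shift //.
  have := congr1 (fun C : {ffun _} => C (rotn (n - r) i)) col_eq.
  by rewrite /= !ffunE -/r -/r' rotnKV // => <-.
- rewrite !cd_rootE -/r -/r'; case: (insub 0) => //= o.
  by rewrite rotn_shift.
Qed.

Definition cd_of_om x : chord_diagram m :=
  ChordDiagram (om_matchP x) (om_colP x) insub0_darts_None.

Lemma om_of_cdK x : om_same (om_of_cd (cd_of_om x)) x.
Proof.
have root_pos0 : cd_root_pos (cd_of_om x) = 0.
  by rewrite /cd_root_pos /=; case: insubP => // o _ ->.
split=> /=; first by apply/permP => i; rewrite cd_matchE root_pos0 subn0 rotnn rotn0.
by apply/ffunP => i; rewrite ffunE root_pos0 rotn0.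
Qed.

End ChordDiagrams.

Section MapsOfMatchings.
Variable m : nat.
Local Notation n := (2 * m).
Implicit Types (x y : ordmatch m) (M : rmap_qt m).

Definition om_flip x (b : 'I_n) := if om_col x b then om_match x b else b.

Lemma om_flipK x : involutive (om_flip x).
Proof.
move=> b; rewrite /om_flip; case col_b: (om_col x b); last by rewrite col_b.
by rewrite om_colP col_b (om_matchP x b).2.
Qed.

Lemma om_sigma_inj x : injective (rotn 1 \o om_flip x).
Proof. exact: inj_comp (@rotn_inj _ 1) (can_inj (om_flipK x)). Qed.

Definition om_sigma x : {perm 'I_n} := perm (@om_sigma_inj x).

Definition om_S x : {set 'I_n} := [set b | om_col x b].

Lemma om_S_match x b : (om_match x b \in om_S x) = (b \in om_S x).
Proof. by rewrite !inE om_colP. Qed.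

Lemma tour_om_sigma x : tour (om_sigma x) (om_match x) (om_S x) =1 rotn 1.
Proof.
move=> b; rewrite /tour !permE inE /= /om_flip om_colP.
by case: ifP => col_b; rewrite col_b // (om_matchP x b).2.
Qed.

Lemma om_quasi_tree x b c : fconnect (tour (om_sigma x) (om_match x) (om_S x)) b c.
Proof. by rewrite (eq_fconnect (tour_om_sigma x)) fconnect_rotn1. Qed.

Definition rmap_of_om x : rmap_qt m :=
  @RMapQT m (om_sigma x) (om_match x) (insub 0) (om_S x) (om_matchP x)
    (quasi_tree_transitive (om_quasi_tree x)) (insub0_darts_None m)
    (om_S_match x) (om_quasi_tree x).

Lemma om_same_rm_iso x y : om_same x y -> rm_iso (rmap_of_om x) (rmap_of_om y).
Proof.
move=> [match_eq col_eq]; exists 1%g; split; [|split; [|split]] => /=.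
- by move=> b; rewrite !perm1 !permE /= /om_flip match_eq col_eq.
- by move=> b; rewrite !perm1 match_eq.
- by case: (insub 0) => //= o; rewrite perm1.
- by apply: eq_imset_perm => b; rewrite perm1 !inE col_eq.
Qed.

Lemma rm_iso_om_same x y : rm_iso (rmap_of_om x) (rmap_of_om y) -> om_same x y.
Proof.
move=> [phi [phi_sigma [phi_match [phi_root phi_S]]]] /=.
have phi1 : phi = 1%g.
  apply: rotn1_commute_id => [|b]; first by rewrite -phi_root.
  by rewrite -(tour_om_sigma x) -(tour_om_sigma y) (tour_conj phi_sigma phi_match phi_S).
move: phi_match phi_S; rewrite phi1 => match_eq S_eq; split.
  by apply/permP => b; have := match_eq b; rewrite !perm1.
apply/ffunP => b; have := congr1 (fun A : {set _} => b \in A) S_eq.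
by rewrite /= -{2}(perm1 b) mem_imset ?inE //; apply: perm_inj.
Qed.

End MapsOfMatchings.

Section Relabelling.
Variable m : nat.
Local Notation n := (2 * m).
Implicit Types (M : rmap_qt m) (P : {perm 'I_n}).

Lemma conjg_rm_alphaE M P i : (rm_alpha M ^ P^-1)%g i = (P^-1)%g (rm_alpha M (P i)).
Proof. by rewrite -{1}(permK P i) permJ. Qed.

Lemma om_pullback_colP M P i :
  [ffun j => P j \in rm_S M] ((rm_alpha M ^ P^-1)%g i) = [ffun j => P j \in rm_S M] i.
Proof. by rewrite !ffunE conjg_rm_alphaE permKV rm_SP. Qed.

Definition om_pullback M P : ordmatch m :=
  OrdMatch (fpf_involution_conjg (P^-1)%g (rm_alphaP M)) (@om_pullback_colP M P).

Lemma rm_iso_pullback M P :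
  omap P (insub 0) = rm_root M ->
  (forall c, P (rotn 1 c) = tour (rm_sigma M) (rm_alpha M) (rm_S M) (P c)) ->
  rm_iso (rmap_of_om (om_pullback M P)) M.
Proof.
move=> P_root P_tour; exists P; split; [|split; [|split]] => /=.
- move=> b; rewrite permE /= P_tour /om_flip /= ffunE /tour.
  case S_Pb: (P b \in rm_S M); last by rewrite S_Pb.
  by rewrite conjg_rm_alphaE permKV rm_SP S_Pb (rm_alphaP M _).2.
- by move=> b; rewrite conjg_rm_alphaE permKV.
- by rewrite P_root.
- by apply: eq_imset_perm => b; rewrite !inE ffunE.
Qed.

Lemma rmap_of_om_surj M : exists x, rm_iso (rmap_of_om x) M.
Proof.
case root_M: (rm_root M) => [r|]; last first.
  have m0 := (rm_rootP M).1 root_M.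
  have no_dart (b : 'I_n) : False by have := ord_gt0 b; rewrite m0.
  have match_fpf : fpf_involution (1%g : {perm 'I_n}) by move=> b; case: (no_dart b).
  have colP : forall b, [ffun _ : 'I_n => false] ((1%g : {perm 'I_n}) b) = [ffun _ => false] b.
    by move=> b; case: (no_dart b).
  exists (OrdMatch match_fpf colP), 1%g; split; [|split; [|split]] => [b|b||];
    try by case: (no_dart b).
  - by rewrite root_M /= ((insub0_darts_None m).2 m0).
  - by apply/setP => b; case: (no_dart b).
have tour_M_inj : injective (tour (rm_sigma M) (rm_alpha M) (rm_S M)).
  exact: tour_inj (rm_alphaP M) (rm_SP M).
have [P [P_root P_tour]] := cycle_labelling tour_M_inj (rm_quasi_tree M r).
by exists (om_pullback M P); apply: rm_iso_pullback; rewrite ?P_root.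
Qed.

End Relabelling.

Theorem lemma12 (m : nat) :
  (exists f : chord_diagram m -> ordmatch m, class_bij (@cd_iso m) (@om_same m) f) /\
  (exists g : ordmatch m -> rmap_qt m, class_bij (@om_same m) (@rm_iso m) g).
Proof.
split.
  exists (@om_of_cd m); split=> [D D' | x]; last by exists (cd_of_om x); apply: om_of_cdK.
  by split; [apply: cd_iso_om_same | apply: om_same_cd_iso].
exists (@rmap_of_om m); split=> [x y | M]; last exact: rmap_of_om_surj.
by split; [apply: om_same_rm_iso | apply: rm_iso_om_same].
Qed.
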